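(* Let $\beta=\frac{1}{16}$, let $S$ be a string of length $n$, let $d\ge 1$ with $2d\le n$, and let $1\le x<y\le n$. Let $p_1,\dots,p_{2\log n}$ be primes chosen independently and uniformly at random from the primes in $\left[\frac{d}{\beta}\log^2 n,\frac{34d}{\beta}\log^2 n\right]$. If $\mathsf{HAM}(S[x,y],S[x,y]^R)\le 2d$, then with probability at least $1-\frac{1}{n^7}$ every mismatch position of $S[x,y]$ is an isolated mismatch; in particular the number of isolated mismatches equals $\mathsf{HAM}(S[x,y],S[x,y]^R)$.
   Context: $S[x,y]=S[x]S[x+1]\cdots S[y]$; for a string $T$ of length $m$, $T^R$ is its reverse and $\mathsf{HAM}(T,T^R)=|\{i: T[i]\neq T[m+1-i]\}|$. A position $i\in[x,y]$ is a mismatch of $S[x,y]$ if $S[i]\neq S[x+y-i]$. A mismatch $i$ is isolated under $p_j$ if it is the only mismatch position of $S[x,y]$ in its residue class modulo $p_j$; it is an isolated mismatch if it is isolated under $p_j$ for at least one $j\in\{1,\dots,2\log n\}$. $\log$ is base 2. *)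

From mathcomp Require Import all_boot.
From Stdlib Require Import Reals.

Set Implicit Arguments.
Unset Strict Implicit.
Unset Printing Implicit Defensive.

(* 1-indexed access: S[i] for 1 <= i <= size S *)
Definition sget (A : eqType) (S : seq A) (i : nat) : option A :=
  nth None (map Some S) i.-1.

Definition mismatches (A : eqType) (S : seq A) (x y : nat) : seq nat :=
  [seq i <- iota x (y - x + 1) | sget S i != sget S (x + y - i)].

Definition ham_rev (A : eqType) (S : seq A) (x y : nat) : nat :=
  size (mismatches S x y).

Definition isolated_under (A : eqType) (S : seq A) (x y p i : nat) : bool :=
  (i \in mismatches S x y) &&
  (count (fun j => j %% p == i %% p) (mismatches S x y) == 1).

Definition isolated (A : eqType) (S : seq A) (x y : nat) (ps : seq nat) (i : nat) : bool :=
  has (fun p => isolated_under S x y p i) ps.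

Definition num_isolated (A : eqType) (S : seq A) (x y : nat) (ps : seq nat) : nat :=
  count (isolated S x y ps) (iota x (y - x + 1)).

Definition good_event (A : eqType) (S : seq A) (x y : nat) (ps : seq nat) : bool :=
  all (isolated S x y ps) (mismatches S x y) && (num_isolated S x y ps == ham_rev S x y).

Definition log2R (n : nat) : R := (ln (INR n) / ln 2)%R.

Definition Rleb (a b : R) : bool := if Rle_dec a b then true else false.

Definition primes_in (lo hi : R) : seq nat :=
  [seq p <- iota 0 (Z.to_nat (up hi)).+1 | prime p && Rleb lo (INR p) && Rleb (INR p) hi].

(* all length-k sequences with entries from P (sample space of k independent uniform draws) *)
Fixpoint draws (P : seq nat) (k : nat) : seq (seq nat) :=
  match k with
  | 0 => [:: [::]]
  | k'.+1 => [seq p :: t | p <- P, t <- draws P k']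
  end.

From mathcomp Require Import all_boot.
From Stdlib Require Import Reals.
From mathcomp Require Import zify.
From Stdlib Require Import Lra Psatz Lia PeanoNat ZArith.

(* A prime p can leave a mismatch i non-isolated only by dividing the distance from i to
   another mismatch.  The product of these fewer than 2d distances is below n^(2d), so at
   most 2d log n / log a of the window's primes, all of them at least a ~ 16 d log^2 n, are
   bad for i.  A Chebyshev-type estimate shows that the window contains at least 16 times as
   many primes, so each of the 2 log n independent draws misses the primes isolating i with
   probability at most 1/16, and the union bound over the at most n mismatches bounds the
   failure probability by n 16^(-2 log n) <= n^(-7). *)

Set Implicit Arguments.
Unset Strict Implicit.
Unset Printing Implicit Defensive.

Section Chebyshev.
(* Requiring Reals rebinds [^] on [nat] to [Nat.pow], which is how the statement of
   [lemma5p2] reads it; each section restores ssrnat's notations locally. *)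
Import ssrnat.

Lemma prod_nat_const_count (I : Type) (r : seq I) (P : pred I) c :
  \prod_(i <- r | P i) c = c ^ count P r.
Proof. by rewrite big_const_seq iter_muln_1. Qed.

Lemma leq_exp2rW e m n : m <= n -> m ^ e <= n ^ e.
Proof. by case: e => // e; rewrite leq_exp2r. Qed.

Lemma divn_double_leq m q : 0 < q -> (2 * m) %/ q <= 2 * (m %/ q) + (q <= 2 * m).
Proof.
move=> q_gt0; case: (leqP q (2 * m)) => [_ | lt2m]; last by rewrite divn_small.
rewrite addn1 -ltnS ltn_divLR //.
have := ltn_ceil m q_gt0; rewrite mulSn; lia.
Qed.

Lemma logn_fact_widen p n R : prime p -> n < R ->
  logn p n`! = \sum_(1 <= k < R) n %/ p ^ k.
Proof.
move=> p_pr ltnR; rewrite logn_fact // [RHS](big_cat_nat _ (n := n.+1)) //=.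
rewrite [X in _ + X]big1_seq ?addn0 // => k /andP[_].
rewrite mem_index_iota => /andP[ltnk _]; apply: divn_small.
exact: leq_trans ltnk (ltnW (ltn_expl k (prime_gt1 p_pr))).
Qed.

(* By Legendre's formula each term (2M) %/ p^k - 2 (M %/ p^k) of the exponent is 0 or 1,
   and it vanishes once p^k > 2M. *)
Lemma expn_logn_central_bin p M : prime p -> 0 < M -> p ^ logn p 'C(2 * M, M) <= 2 * M.
Proof.
move=> p_pr M_gt0; have p_gt1 := prime_gt1 p_pr.
set N := 2 * M; set t := trunc_log p N.
have binN : 'C(N, M) * (M`! * M`!) = N`!.
  by have := bin_fact (leq_addl M M); rewrite addnK /N mul2n addnn.
have logN : logn p N`! = logn p 'C(N, M) + (logn p M`! + logn p M`!).
  by rewrite -binN !lognM ?muln_gt0 ?fact_gt0 ?bin_gt0 /N ?leq_pmull.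
rewrite !(logn_fact_widen (R := N.+1) p_pr) ?ltnS ?leq_pmull // in logN.
suff : logn p 'C(N, M) <= t.
  by move/(leq_pexp2l (ltnW p_gt1))/leq_trans; apply; apply: trunc_logP; lia.
have carries : logn p 'C(N, M) <= \sum_(1 <= k < N.+1) (p ^ k <= N).
  have : \sum_(1 <= k < N.+1) N %/ p ^ k <=
         \sum_(1 <= k < N.+1) (2 * (M %/ p ^ k) + (p ^ k <= N)).
    by apply: leq_sum => k _; apply: divn_double_leq; rewrite expn_gt0 ltnW.
  rewrite big_split /= -big_distrr /= logN.
  by move: (logn _ _) (\sum_(1 <= k < N.+1) _) (\sum_(1 <= k < N.+1) _) => l X Y; lia.
apply: leq_trans carries _.
have ltt : t < N.+1 by apply: leq_ltn_trans (ltnW (ltn_expl t p_gt1)) _; apply: trunc_logP; lia.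
rewrite (big_cat_nat _ (n := t.+1)) //= [X in _ + X]big1_seq ?addn0; last first.
  move=> k /andP[_]; rewrite mem_index_iota => /andP[ltk _]; apply/eqP; rewrite eqb0 -ltnNge.
  by apply: leq_trans (trunc_log_ltn N p_gt1) _; rewrite leq_exp2l.
apply: (@leq_trans (\sum_(1 <= k < t.+1) 1)); first by apply: leq_sum => k _; apply: leq_b1.
by rewrite sum_nat_const_nat muln1 subSS subn0.
Qed.

Lemma central_bin_lower M : 4 ^ M <= (2 * M).+1 * 'C(2 * M, M).
Proof.
elim: M => [|M IH]; first by rewrite bin0.
have e1 := mul_bin_diag (2 * M).+2 M.
have e2 := mul_bin_diag (2 * M).+1 M.
have sym : 'C((2 * M).+1, M.+1) = 'C((2 * M).+1, M).
  rewrite -[in RHS]bin_sub; last lia.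
  by congr 'C(_, _); lia.
rewrite /= -sym in e1; rewrite /= in e2; rewrite (_ : 2 * M.+1 = (2 * M).+2) ?expnS; last lia.
move: e1 e2 IH; move: 'C(2 * M, M) 'C((2 * M).+1, M.+1) 'C((2 * M).+2, M.+1) (4 ^ M).
move=> C0 C1 C2 F e1 e2 IH.
rewrite -(leq_pmul2l (ltn0Sn M)) [in X in _ <= X]mulnCA -e1.
apply: (@leq_trans (4 * (M.+1 * ((2 * M).+1 * C0)))).
  by rewrite mulnCA leq_mul2l leq_mul2l IH !orbT.
by rewrite e2; nia.
Qed.

(* C(2m+1, m) and C(2m+1, m+1) are two equal terms of the expansion of 2^(2m+1). *)
Lemma bin_mid_odd_leq m : 'C((2 * m).+1, m) <= 4 ^ m.
Proof.
have := expnDn 1 1 (2 * m).+1; rewrite add1n.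
under eq_bigr => i _ do rewrite !exp1n !muln1.
rewrite (bigD1 (inord m)) // (bigD1 (inord m.+1)) /=; last first.
  by apply/eqP => /(congr1 val) /=; rewrite !inordK; lia.
rewrite !inordK; try lia.
have sym : 'C((2 * m).+1, m.+1) = 'C((2 * m).+1, m).
  rewrite -[in RHS]bin_sub; last lia.
  by congr 'C(_, _); lia.
rewrite sym => sum2.
have : 2 * 'C((2 * m).+1, m) <= 2 ^ (2 * m).+1 by rewrite sum2 addnA mul2n -addnn leq_addr.
by rewrite expnS leq_pmul2l // expnM.
Qed.

Lemma dvdn_prod_primes (r : seq nat) m : uniq r ->
  {in r, forall p, prime p -> p %| m} -> \prod_(p <- r | prime p) p %| m.
Proof.
elim: r => [|q r IH] /=; first by rewrite big_nil dvd1n.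
move=> /andP[q_r r_uniq] dvd_m; rewrite big_cons.
have dvd_r : \prod_(p <- r | prime p) p %| m.
  by apply: IH => // p p_r; apply: dvd_m; rewrite inE p_r orbT.
case q_pr: (prime q) => //.
rewrite Gauss_dvd ?dvd_r ?dvd_m ?mem_head // prime_coprime // Euclid_dvd_prod //.
rewrite big_has_cond; apply/hasPn => p p_r /=; apply/negP => /andP[p_pr].
by rewrite dvdn_prime2 // => /eqP eq_qp; rewrite eq_qp p_r in q_r.
Qed.

Lemma coprime_fact p k : prime p -> k < p -> coprime p k`!.
Proof.
move=> p_pr; elim: k => [|k IH] lt_kp; first by rewrite coprimen1.
rewrite factS coprimeMr IH ?andbT 1?ltnW // prime_coprime //.
by apply/negP => /dvdn_leq le_pk; move: lt_kp; rewrite ltnNge le_pk.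
Qed.

Definition primorial n := \prod_(0 <= p < n.+1 | prime p) p.

(* Every prime in (m + 1, 2m + 1] divides (2m + 1)! but not m! (m + 1)!. *)
Lemma prod_primes_dvd_bin m :
  \prod_(m.+2 <= p < (2 * m).+2 | prime p) p %| 'C((2 * m).+1, m).
Proof.
apply: dvdn_prod_primes; first exact: iota_uniq.
move=> p; rewrite mem_index_iota => /andP[lt_mp lt_p2m] p_pr.
have facts := bin_fact (leqW (leq_pmull m (isT : 0 < 2))).
rewrite (_ : (2 * m).+1 - m = m.+1) in facts; last lia.
rewrite -(@Gauss_dvdl _ _ (m`! * m.+1`!)); last by rewrite coprimeMr !coprime_fact //; lia.
by rewrite facts dvdn_fact // prime_gt0.
Qed.

Lemma primorial_leq n : primorial n <= 4 ^ n.
Proof.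
elim/ltn_ind: n => n IH.
have [le_n2 | lt2n] := leqP n 2.
  by case: n le_n2 {IH} => [|[|[|]]] //; rewrite /primorial unlock.
case/boolP: (odd n) => [n_odd | n_even].
  have [m def_n] : exists m, n = (2 * m).+1.
    by exists n./2; rewrite -[LHS]odd_double_half n_odd mul2n.
  rewrite /primorial def_n (big_cat_nat _ (n := m.+2)) //=; last lia.
  have low : \prod_(0 <= p < m.+2 | prime p) p <= 4 ^ m.+1 by apply: IH; lia.
  have bin_gt0' : 0 < 'C((2 * m).+1, m) by rewrite bin_gt0; lia.
  have high := leq_trans (dvdn_leq bin_gt0' (prod_primes_dvd_bin m)) (bin_mid_odd_leq m).
  by rewrite (leq_trans (leq_mul low high)) // -expnD leq_exp2l //; lia.
rewrite /primorial big_mkcond big_nat_recr //= -big_mkcond ifN ?muln1; last first.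
  apply/primePn; right; exists 2; first lia.
  by rewrite dvdn2.
have le_pred : primorial n.-1 <= 4 ^ n.-1 by apply: IH; lia.
rewrite /primorial prednK in le_pred; last lia.
by apply: leq_trans le_pred _; rewrite leq_exp2l //; lia.
Qed.

Lemma central_bin_prime_decomp M : 0 < M ->
  'C(2 * M, M) = \prod_(0 <= p < (2 * M).+1) p ^ logn p 'C(2 * M, M).
Proof.
move=> M_gt0; set C := 'C(2 * M, M).
have C_gt0 : 0 < C by rewrite bin_gt0 leq_pmull.
rewrite -{1}(partnT C_gt0) (widen_partn _ (leq_maxl C (2 * M))).
rewrite (big_cat_nat _ (n := (2 * M).+1)) //= ?ltnS ?leq_maxr //.
rewrite [X in _ * X]big1_seq ?muln1; last first.
  move=> p /andP[_]; rewrite mem_index_iota => /andP[lt2Mp _].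
  case/boolP: (prime p) => [p_pr | /negbTE p_npr]; last by rewrite lognE p_npr.
  suff -> : logn p C = 0 by [].
  apply/eqP; rewrite -leqn0 leqNgt; apply/negP => logn_gt0.
  have := expn_logn_central_bin p_pr M_gt0; rewrite -/C leqNgt => /negP; apply.
  by apply: leq_trans lt2Mp _; rewrite -{1}(expn1 p) leq_exp2l // prime_gt1.
by apply: eq_bigl => p.
Qed.

Lemma expn_logn_central_bin_large p M : prime p -> 2 * M < p * p ->
  p ^ logn p 'C(2 * M, M) <= p.
Proof.
move=> p_pr lt2Mpp; case: (posnP M) => [-> | M_gt0]; first by rewrite bin0 logn1 prime_gt0.
have p_gt1 := prime_gt1 p_pr.
have : logn p 'C(2 * M, M) < 2.
  rewrite -(ltn_exp2l _ _ p_gt1); apply: leq_ltn_trans lt2Mpp.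
  exact: expn_logn_central_bin.
by case: (logn _ _) => [|[|]] // _; rewrite ?expn1 // prime_gt0.
Qed.

Lemma count_ltn_iota K a : count (fun i => i < K) (iota 0 a) <= K.
Proof.
rewrite -size_filter -{2}(size_iota 0 K); apply: uniq_leq_size.
  exact/filter_uniq/iota_uniq.
by move=> i; rewrite mem_filter !mem_iota => /andP[].
Qed.

Lemma four_sq_leq_exp2 e : 8 <= e -> 4 * e ^ 2 <= 2 ^ e.
Proof.
elim: e => // e IH; rewrite leq_eqVlt => /orP[/eqP <- // | le8e].
have := IH le8e; rewrite -!mulnn expnS; move: (2 ^ e) => t; nia.
Qed.

(* With e = trunc_log 2 T and j = sqrt T, 4 e^2 <= T gives 2e <= j, so the left-hand
   side is at most 2^((e+1)(j+2)) <= 2^((j+2)^2 / 2). *)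
Lemma central_overhead_leq a T : 16 <= a -> T = 34 * a - 34 ->
  T.+1 * T ^ (Nat.sqrt T).+1 <= 4 ^ (13 * a - 17).
Proof.
move=> le16a def_T; set j := Nat.sqrt T; set e := trunc_log 2 T.
have [/leP sq_j /leP sq_j1] := Nat.sqrt_spec T (Nat.le_0_l T).
rewrite -/j !multE in sq_j sq_j1.
have ltTe : T < 2 ^ e.+1 := trunc_log_ltn T (isT : 1 < 2).
have le8e : 8 <= e by apply: trunc_log_max => //; rewrite def_T; lia.
have le2ej : 2 * e <= j.
  have := leq_trans (four_sq_leq_exp2 le8e) (trunc_logP (isT : 1 < 2) (_ : 0 < T)).
  rewrite -ltnS -mulnn; move: sq_j1; rewrite def_T; nia.
have le23j : 23 * j <= T + 506.
  case: (leqP j 22) => [|lt22j]; first lia.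
  by apply: leq_trans (leq_addr _ _); apply: leq_trans sq_j; rewrite leq_mul2r lt22j orbT.
have exponent : e.+1 * j.+2 <= 2 * (13 * a - 17).
  have : 2 * (e.+1 * j.+2) <= j * j + 4 * j + 4.
    rewrite mulnA (_ : j * j + 4 * j + 4 = j.+2 * j.+2); last by rewrite !mulSn !mulnS; lia.
    by rewrite leq_mul2r; apply/orP; right; lia.
  move: (e.+1 * j.+2) (j * j) sq_j le23j => E J; rewrite def_T; lia.
apply: (@leq_trans (2 ^ e.+1 * (2 ^ e.+1) ^ j.+1)).
  by rewrite leq_mul // leq_exp2rW // ltnW.
rewrite -expnM -expnD -mulnS (_ : 4 = 2 ^ 2) // -expnM leq_exp2l //.
Qed.

Lemma prod_small_primes_central_bin_leq M a : 0 < M -> 0 < a ->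
  \prod_(0 <= p < a) p ^ logn p 'C(2 * M, M) <= 4 ^ a * (2 * M) ^ (Nat.sqrt (2 * M)).+1.
Proof.
move=> M_gt0 a_gt0; set T := 2 * M; set j := Nat.sqrt T.
have [_ /leP sq_j1] := Nat.sqrt_spec T (Nat.le_0_l T); rewrite -/j multE in sq_j1.
apply: (@leq_trans (\prod_(0 <= p < a | prime p) (p * if p * p <= T then T else 1))).
  rewrite [X in _ <= X]big_mkcond /=; apply: leq_prod => p _.
  case/boolP: (prime p) => [p_pr | /negbTE p_npr]; last by rewrite lognE p_npr.
  case: (leqP (p * p) T) => [_ | ltTpp]; last by rewrite muln1 expn_logn_central_bin_large.
  by apply: leq_trans (expn_logn_central_bin p_pr M_gt0) _; rewrite leq_pmull ?prime_gt0.
rewrite big_split /= -big_mkcondr /= prod_nat_const_count leq_mul //.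
  have := primorial_leq a.-1; rewrite /primorial prednK // => /leq_trans; apply.
  by rewrite leq_exp2l // leq_pred.
rewrite leq_pexp2l ?muln_gt0 //; apply: leq_trans (count_ltn_iota j.+1 a).
rewrite /index_iota subn0; apply: sub_count => p /andP[_ le_ppT] /=.
rewrite ltnNge; apply/negP => lejp.
by move: sq_j1; rewrite ltnNge (leq_trans (leq_mul lejp lejp) le_ppT).
Qed.

Lemma prod_large_primes_central_bin_leq M a : 0 < M ->
  \prod_(a <= p < (2 * M).+1) p ^ logn p 'C(2 * M, M) <=
    (2 * M) ^ count prime (index_iota a (2 * M).+1).
Proof.
move=> M_gt0; rewrite -prod_nat_const_count [X in _ <= X]big_mkcond /=; apply: leq_prod => p _.
case/boolP: (prime p) => [p_pr | /negbTE p_npr]; last by rewrite lognE p_npr.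
exact: expn_logn_central_bin.
Qed.

(* Chebyshev's argument with M = 17a - 17: in 4^M <= (2M+1) C(2M, M), the primes below a
   contribute at most 4^a (2M)^(sqrt(2M) + 1) and each of the c primes of [a, 2M] at most
   2M <= a^3; if a^c < 4^a, the right-hand side stays below 4^(13a - 17) 4^a 4^(3a) = 4^M. *)
Lemma count_primes_lower a : 16 <= a ->
  4 ^ a <= a ^ count prime (index_iota a (34 * a - 33)).
Proof.
move=> le16a; set M := 17 * a - 17; set T := 2 * M.
have def_T : T = 34 * a - 34 by rewrite /T /M; lia.
have M_gt0 : 0 < M by rewrite /M; lia.
rewrite (_ : 34 * a - 33 = T.+1); last lia.
set c := count prime (index_iota a T.+1).
have decomp := central_bin_prime_decomp M_gt0.
rewrite (big_cat_nat _ (n := a)) //= in decomp; last by rewrite -/T def_T; lia.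
have small := prod_small_primes_central_bin_leq M_gt0 (leq_trans (isT : 0 < 16) le16a).
have large := prod_large_primes_central_bin_leq a M_gt0; rewrite -/T -/c in small large.
have overhead := central_overhead_leq le16a def_T.
rewrite leqNgt; apply/negP => lt_c.
have lt_Tc : T ^ c < 4 ^ (3 * a).
  have le_Ta3 : T <= a ^ 3 by rewrite def_T !expnS expn0 muln1; nia.
  apply: leq_ltn_trans (leq_exp2rW c le_Ta3) _.
  by rewrite -expnM mulnC expnM [3 * a]mulnC [4 ^ _]expnM ltn_exp2r.
have : T.+1 * 'C(T, M) < 4 ^ M.
  rewrite decomp; apply: leq_ltn_trans (leq_mul (leqnn _) (leq_mul small large)) _.
  rewrite mulnCA !mulnA -[4 ^ a * _ * _]mulnA [_ * T.+1]mulnC.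
  apply: leq_ltn_trans (leq_mul (leq_mul (leqnn _) overhead) (leqnn _)) _.
  apply: (@leq_trans (4 ^ a * 4 ^ (13 * a - 17) * 4 ^ (3 * a))).
    by rewrite ltn_pmul2l ?muln_gt0 ?expn_gt0.
  by rewrite -!expnD leq_exp2l // /M; lia.
by rewrite ltnNge central_bin_lower.
Qed.
End Chebyshev.

Definition distn (i j : nat) := (i - j) + (j - i).

Section Mismatches.
Import ssrnat.
Variables (A : eqType) (S : seq A) (x y : nat).
Local Notation M := (mismatches S x y).

Lemma mismatches_uniq : uniq M.
Proof. exact/filter_uniq/iota_uniq. Qed.

Lemma mem_mismatches_bounds j : x <= y -> j \in M -> x <= j <= y.
Proof. by move=> le_xy; rewrite mem_filter mem_iota => /andP[_]; lia. Qed.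

Lemma not_isolated_under_dvdn p i : 0 < p -> i \in M -> ~~ isolated_under S x y p i ->
  exists2 j, j \in rem i M & p %| distn i j.
Proof.
move=> p_gt0 iM; rewrite /isolated_under iM /=.
rewrite (permP (perm_to_rem iM)) /= eqxx add1n eqSS -lt0n -has_count.
case/hasP => j j_rem /eqP eq_mod; exists j => //.
rewrite /distn; case: (leqP j i) => le_ji.
  by rewrite (_ : j - i = 0) ?addn0 -?eqn_mod_dvd ?eq_mod //; lia.
by rewrite (_ : i - j = 0) ?add0n -?eqn_mod_dvd ?eq_mod //; lia.
Qed.

(* The primes under which i is not isolated all divide the product of the distances from
   i to the other mismatches. *)
Lemma expn_count_not_isolated_leq (P : seq nat) a i : uniq P ->
  {in P, forall p, prime p /\ a <= p} -> x <= y -> i \in M ->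
  a ^ count (fun p => ~~ isolated_under S x y p i) P <= (y - x) ^ (ham_rev S x y).-1.
Proof.
move=> P_uniq P_primes le_xy iM.
set bad := filter (fun p => ~~ isolated_under S x y p i) P.
set D := \prod_(j <- rem i M) distn i j.
have dist_bounds j : j \in rem i M -> 0 < distn i j <= y - x.
  rewrite (mem_rem_uniq _ mismatches_uniq) inE => /andP[/eqP neq_ji jM].
  move: (mem_mismatches_bounds le_xy jM) (mem_mismatches_bounds le_xy iM); rewrite /distn; lia.
have D_gt0 : 0 < D.
  by rewrite /D big_seq_cond; apply: prodn_cond_gt0 => j /andP[/dist_bounds/andP[]].
have bad_dvd : \prod_(p <- bad | prime p) p %| D.
  apply: dvdn_prod_primes; first exact: filter_uniq.
  move=> p; rewrite mem_filter => /andP[not_iso _] p_pr.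
  have [j j_rem p_dvd] := not_isolated_under_dvdn (prime_gt0 p_pr) iM not_iso.
  by apply: dvdn_trans p_dvd _; rewrite /D (big_rem j j_rem) dvdn_mulr.
have count_bad : count (fun p => ~~ isolated_under S x y p i) P = count prime bad.
  rewrite -size_filter -/bad; apply/esym/eqP; rewrite -all_count.
  by apply/allP => p; rewrite mem_filter => /andP[_ /P_primes[]].
apply: (@leq_trans (\prod_(p <- bad | prime p) p)).
  rewrite count_bad -prod_nat_const_count big_seq_cond [X in _ <= X]big_seq_cond.
  by apply: leq_prod => p /andP[]; rewrite mem_filter => /andP[_ /P_primes[]].
apply: leq_trans (dvdn_leq D_gt0 bad_dvd) _.
apply: (@leq_trans (\prod_(j <- rem i M) (y - x))).
  by rewrite /D !big_seq; apply: leq_prod => j /dist_bounds/andP[].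
by rewrite prod_nat_const_count count_predT size_rem.
Qed.

Lemma good_event_of_all_isolated ps : all (isolated S x y ps) M -> good_event S x y ps.
Proof.
move=> all_iso; rewrite /good_event all_iso /num_isolated /ham_rev.
move: all_iso; rewrite all_count => /eqP <-; rewrite /mismatches count_filter.
apply/eqP/eq_count => j /=; case iso: (isolated S x y ps j) => //=.
by move: iso => /hasP[p _ /andP[]]; rewrite mem_filter => /andP[].
Qed.

End Mismatches.

Section Draws.
Import ssrnat.

Lemma size_draws P k : size (draws P k) = size P ^ k.
Proof.
elim: k => [|k IH] //=; rewrite expnS -IH.
move: (draws P k) => D; elim: P {IH} => //= p P IHP.
by rewrite size_cat size_map IHP.
Qed.

Lemma count_all_draws (f : pred nat) P k :
  count (all f) (draws P k) = count f P ^ k.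
Proof.
elim: k => [|k IH] //=; rewrite expnS -IH.
move: (draws P k) => D; elim: P {IH} => //= p P IHP.
rewrite count_cat IHP count_map mulnDl; congr (_ + _).
by rewrite /preim /=; case: (f p) => /=; rewrite ?mul1n // mul0n count_pred0.
Qed.

Lemma count_has_leq_sum (I T : Type) (r : seq I) (f : I -> pred T) (s : seq T) :
  count (fun t => has (fun i => f i t) r) s <= \sum_(i <- r) count (f i) s.
Proof.
elim: r => [|i r IH] /=; first by rewrite big_nil count_pred0.
rewrite big_cons; apply: leq_trans (leq_add (leqnn _) IH).
rewrite -count_predUI; apply: leq_trans (leq_addr _ _).
by apply: sub_count => t.
Qed.

(* A draw outside the good event fails, for some mismatch, to isolate it in every
   coordinate. *)
Lemma count_not_good_draws_leq (A : eqType) (S : seq A) x y P k :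
  count (predC (good_event S x y)) (draws P k) <=
    \sum_(i <- mismatches S x y) count (fun p => ~~ isolated_under S x y p i) P ^ k.
Proof.
under eq_bigr => i _ do rewrite -count_all_draws.
apply: leq_trans (count_has_leq_sum _ _ _); apply: sub_count => ps /= not_good.
case/boolP: (all (isolated S x y ps) (mismatches S x y)) => [/good_event_of_all_isolated | ].
  by rewrite (negbTE not_good).
by case/allPn => i iM not_iso; apply/hasP; exists i => //; rewrite all_predC.
Qed.

End Draws.

Section PrimeWindow.
Import ssrnat.

Lemma Nat_powE m n : Nat.pow m n = m ^ n.
Proof. by elim: n => // n IH; rewrite expnS -IH. Qed.

Lemma INR_expn m n : INR (m ^ n) = (INR m ^ n)%R.
Proof. by rewrite -Nat_powE pow_INR. Qed.

Lemma ln2_gt0 : (0 < ln 2)%R.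
Proof. by rewrite -ln_1; apply: ln_increasing; lra. Qed.

Lemma log2R_ge1 n : 2 <= n -> (1 <= log2R n)%R.
Proof.
move=> le2n; have le2nR : (2 <= INR n)%R by apply: (le_INR 2); apply/leP.
have ln_le : (ln 2 <= ln (INR n))%R.
  have [lt2n | <-] := Rle_lt_or_eq_dec _ _ le2nR; last lra.
  by apply/Rlt_le/ln_increasing; lra.
have ln2_pos := ln2_gt0; rewrite /log2R; apply: (Rmult_le_reg_r (ln 2)) => //.
by rewrite /Rdiv Rmult_assoc Rinv_l; lra.
Qed.

Lemma leq_exp2_of_log2R n m e : 0 < n -> (INR m * log2R n <= INR e)%R -> n ^ m <= 2 ^ e.
Proof.
move=> n_gt0 le_log; apply/leP/INR_le; rewrite !INR_expn.
have n_pos : (0 < INR n)%R by apply: (lt_INR 0); apply/ltP.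
have -> : INR 2 = 2%R by rewrite /=; lra.
apply: Rnot_lt_le => lt_pow; have := ln_increasing _ _ (pow_lt 2 e ltac:(lra)) lt_pow.
have ln2_pos := ln2_gt0.
have -> : ln (INR n ^ m) = (INR m * log2R n * ln 2)%R.
  by rewrite ln_pow // /log2R; field; lra.
rewrite ln_pow; [nra | lra].
Qed.

Lemma exists_INR_ceil r : (0 <= r)%R -> exists a, (r <= INR a < r + 1)%R.
Proof.
move=> r_ge0; have [lt_ceil ge_ceil] := Zceil_bound r.
have ceil_ge0 : (0 <= Zceil r)%Z by apply: le_IZR; lra.
by exists (Z.to_nat (Zceil r)); rewrite INR_IZR_INZ Z2Nat.id //; lra.
Qed.

Lemma RlebP a b : reflect (a <= b)%R (Rleb a b).
Proof. by rewrite /Rleb; case: Rle_dec => ?; constructor. Qed.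

Lemma mem_primes_in lo hi p :
  (p \in primes_in lo hi) = [&& prime p, Rleb lo (INR p) & Rleb (INR p) hi].
Proof.
rewrite mem_filter mem_iota add0n leq0n andTb.
case: (boolP (Rleb (INR p) hi)) => [/RlebP le_p_hi | _]; last by rewrite !andbF.
have lt_p_up : p < (Z.to_nat (up hi)).+1.
  have [lt_up _] := archimed hi.
  have : (IZR (Z.of_nat p) < IZR (up hi))%R by rewrite -INR_IZR_INZ; lra.
  by move/lt_IZR => ?; apply/ltP; lia.
by rewrite lt_p_up !andbT.
Qed.

Lemma primes_in_window lo : (16 <= lo)%R ->
  exists2 a, (lo <= INR a)%R &
    [/\ 16 <= a, {in primes_in lo (34 * lo), forall p, prime p /\ a <= p} &
        4 ^ a <= a ^ size (primes_in lo (34 * lo))].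
Proof.
move=> le16lo; have [|a [le_lo_a lt_a_lo]] := exists_INR_ceil (r := lo); first lra.
set P := primes_in lo (34 * lo).
have le16a : 16 <= a by apply/leP/INR_le; rewrite [INR 16]/=; lra.
have P_ge_a : {in P, forall p, prime p /\ a <= p}.
  move=> p; rewrite mem_primes_in.
  case/and3P=> p_pr /RlebP le_lo_p _; split => //.
  by apply/leP; rewrite -Nat.lt_succ_r; apply: INR_lt; rewrite S_INR; lra.
exists a => //; split => //.
apply: leq_trans (count_primes_lower le16a) _; apply: leq_pexp2l; first lia.
rewrite -size_filter; apply: uniq_leq_size; first exact/filter_uniq/iota_uniq.
move=> p; rewrite mem_filter mem_index_iota => /andP[p_pr /andP[le_ap lt_p]].
rewrite mem_primes_in p_pr /=.
have le_ap_R : (INR a <= INR p)%R by apply/le_INR/leP.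
have le_p_R : (INR p <= 34 * INR a - 34)%R.
  have : p <= 34 * a - 34 by lia.
  by move/leP/le_INR; rewrite minus_INR ?mult_INR /=; [lra | apply/leP; lia].
by apply/andP; split; apply/RlebP; lra.
Qed.

End PrimeWindow.

Section FailureProbability.
Import ssrnat.

Lemma mul16_leq_of_expn a N B n d : 2 <= a -> 4 ^ a <= a ^ N -> a ^ B <= n ^ (2 * d) ->
  n ^ (16 * d) <= 2 ^ a -> 16 * B <= N.
Proof.
move=> le2a cheb le_B le_n; rewrite leqNgt; apply/negP => lt_N.
have : a * 4 ^ a <= 4 ^ a.
  apply: (leq_trans (leq_mul (leqnn a) cheb)); rewrite -expnS.
  apply: (leq_trans (leq_pexp2l (ltnW le2a) lt_N)).
  rewrite mulnC expnM; apply: (leq_trans (leq_exp2rW 16 le_B)).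
  rewrite -expnM (_ : 2 * d * 16 = 16 * d * 2); last lia.
  by rewrite expnM; apply: (leq_trans (leq_exp2rW 2 le_n)); rewrite -expnM mulnC expnM.
by rewrite leqNgt ltn_Pmull ?expn_gt0.
Qed.

Lemma expn8_leq_16_up_log n : n ^ 8 <= 16 ^ (2 * up_log 2 n).
Proof.
rewrite (_ : 16 = 2 ^ 4) // -expnM mulnA mulnC expnM.
exact: leq_exp2rW (up_logP n (isT : 1 < 2)).
Qed.

Lemma sum_expn_leq_fraction (I : eqType) (r : seq I) (F : I -> nat) n k N :
  0 < n -> size r <= n -> n ^ 8 <= 16 ^ k -> {in r, forall i, 16 * F i <= N} ->
  n ^ 7 * \sum_(i <- r) F i ^ k <= N ^ k.
Proof.
move=> n_gt0 size_r le_n8 F_leq.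
rewrite -(leq_pmul2l n_gt0) mulnA -expnS.
apply: (@leq_trans (\sum_(i <- r) N ^ k)).
  rewrite big_distrr /= big_seq [X in _ <= X]big_seq; apply: leq_sum => i ir.
  by apply: (leq_trans (leq_mul le_n8 (leqnn _))); rewrite -expnMn leq_exp2rW ?F_leq.
by rewrite big_const_seq iter_addn_0 count_predT mulnC leq_mul2r size_r orbT.
Qed.

Lemma INR_ge_fraction (G E X n : nat) : 0 < n -> n ^ 7 * E <= X -> X <= G + E ->
  (INR G >= (1 - 1 / INR n ^ 7) * INR X)%R.
Proof.
move=> n_gt0 /leP/le_INR le_E /leP/le_INR le_X.
rewrite mult_INR INR_expn in le_E; rewrite plus_INR in le_X.
have n_pos : (0 < INR n)%R by apply/(lt_INR 0)/ltP.
have q_pos : (0 < INR n ^ 7)%R by apply: pow_lt.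
have : (INR E <= INR X / INR n ^ 7)%R.
  apply: (Rmult_le_reg_l (INR n ^ 7)) => //.
  have -> : (INR n ^ 7 * (INR X / INR n ^ 7) = INR X)%R by field; lra.
  exact: le_E.
have -> : ((1 - 1 / INR n ^ 7) * INR X = INR X - INR X / INR n ^ 7)%R by field; lra.
lra.
Qed.

Lemma sum_count_not_isolated_leq (A : eqType) (S : seq A) n d x y lo k :
  1 <= d -> 2 * d <= n -> x < y -> y <= n -> ham_rev S x y <= 2 * d ->
  (16 * INR d * log2R n ^ 2 <= lo)%R -> n ^ 8 <= 16 ^ k ->
  n ^ 7 * \sum_(i <- mismatches S x y)
            count (fun p => ~~ isolated_under S x y p i) (primes_in lo (34 * lo)) ^ k
    <= size (primes_in lo (34 * lo)) ^ k.
Proof.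
move=> le1d le2dn lt_xy le_yn ham_le le_lo le_n8; set P := primes_in lo (34 * lo).
have n_gt0 : 0 < n by lia.
have L_ge1 : (1 <= log2R n)%R by apply: log2R_ge1; lia.
have d_ge1 : (1 <= INR d)%R by apply: (le_INR 1); apply/leP.
have [|a le_lo_a [le16a P_ge_a cheb]] := primes_in_window (lo := lo); first nra.
have n_pow : n ^ (16 * d) <= 2 ^ a.
  apply: leq_exp2_of_log2R => //; rewrite mult_INR (_ : INR 16 = 16%R); last by rewrite /=; lra.
  have : (INR d * log2R n <= INR d * log2R n ^ 2)%R.
    by apply: Rmult_le_compat_l; [lra | nra].
  lra.
have P_uniq : uniq P by exact/filter_uniq/iota_uniq.
apply: sum_expn_leq_fraction n_gt0 (leq_trans ham_le le2dn) le_n8 _ => i iM.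
apply: mul16_leq_of_expn cheb _ n_pow; first lia.
apply: leq_trans (expn_count_not_isolated_leq P_uniq P_ge_a (ltnW lt_xy) iM) _.
by apply: leq_trans (leq_exp2rW _ (_ : y - x <= n)) _; rewrite ?leq_pexp2l //; lia.
Qed.
End FailureProbability.

Theorem lemma5p2 (A : eqType) (S : seq A) (n d x y : nat) :
  size S = n -> 1 <= d -> 2 * d <= n -> 1 <= x -> x < y -> y <= n ->
  ham_rev S x y <= 2 * d ->
  let beta := (1 / 16)%R in
  let L := log2R n in
  let P := primes_in (INR d / beta * L ^ 2)%R (34 * INR d / beta * L ^ 2)%R in
  let k := 2 * up_log 2 n in
  (INR (count (good_event S x y) (draws P k))
     >= (1 - 1 / INR n ^ 7) * INR (size P ^ k))%R.
Proof.
move=> _ le1d le2dn _ lt_xy le_yn ham_le beta L P k.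
have def_P : P = primes_in (16 * INR d * L ^ 2) (34 * (16 * INR d * L ^ 2)).
  by rewrite /P /beta; congr primes_in; field.
have not_isolated_sum := sum_count_not_isolated_leq le1d le2dn lt_xy le_yn ham_le
  (Rle_refl _) (expn8_leq_16_up_log n).
rewrite /k Nat_powE def_P; apply: INR_ge_fraction not_isolated_sum _; first lia.
rewrite -size_draws -(count_predC (good_event S x y)) leq_add2l.
exact: count_not_good_draws_leq.
Qed.
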